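(* Let $L_1$ be a non-degenerate even lattice. Then $\overline{\mathrm{O}(L_1)}=\mathrm{O}(q(L_1))$ if and only if there exists a non-degenerate even lattice $L_2$ satisfying: (1) there exists an even unimodular lattice $\Gamma\subset L_1^\vee\oplus L_2^\vee$ containing $L_1$ and $L_2$ primitively, and it is essentially unique: for any other even unimodular $\Gamma'\subset L_1^\vee\oplus L_2^\vee$ containing $L_1$ and $L_2$ primitively there exist $\varphi_i\in\mathrm{O}(L_i)$ ($i=1,2$) such that (the $\mathbb{Q}$-linear extension of) $\varphi_1\oplus\varphi_2$ maps $\Gamma$ onto $\Gamma'$; (2) the restriction map $\mathrm{O}(\Gamma,L_2)\to\mathrm{O}(L_2)$ is surjective, where $\mathrm{O}(\Gamma,L_2)=\{g\in\mathrm{O}(\Gamma):g(L_2)=L_2\}$.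
   Context: A lattice is a free $\mathbb{Z}$-module of finite rank with an integral symmetric bilinear form; a sublattice $K\subset L$ is primitive if $L/K$ is torsion free. For a non-degenerate even lattice $L$: $L^\vee=\{v\in L\otimes\mathbb{Q}:\langle v,L\rangle\subset\mathbb{Z}\}$, $A(L)=L^\vee/L$, discriminant form $q(L):A(L)\to\mathbb{Q}/2\mathbb{Z}$, $x\bmod L\mapsto\langle x,x\rangle\bmod2\mathbb{Z}$; $\mathrm{O}(q(L))$ the automorphisms of $A(L)$ preserving $q(L)$; $\overline{\mathrm{O}(L)}$ the image of the natural map $\mathrm{O}(L)\to\mathrm{O}(q(L))$. The form on $L_1^\vee\oplus L_2^\vee$ is the orthogonal sum of the $\mathbb{Q}$-extended forms. *)

(* Lattices of rank n are Z^n (inside Q^n, as rat column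
   vectors) with an integral symmetric Gram matrix G. *)
From HB Require Import structures.
From mathcomp Require Import all_boot all_order all_algebra.
Set Implicit Arguments. Unset Strict Implicit. Unset Printing Implicit Defensive.
Import Order.TTheory GRing.Theory Num.Theory.
Local Open Scope ring_scope.

Definition gramQ n (G : 'M[int]_n) : 'M[rat]_n := map_mx (fun z : int => z%:~R) G.

Definition bq n (A : 'M[rat]_n) (v w : 'cV[rat]_n) : rat := (v^T *m A *m w) ord0 ord0.

Definition inL n (v : 'cV[rat]_n) : Prop := forall i, v i ord0 \is a Num.int.

Definition isEven (x : rat) : Prop := x / 2%:R \is a Num.int.

Definition sym_gram n (G : 'M[int]_n) : Prop := G^T = G.
Definition even_gram n (G : 'M[int]_n) : Prop :=
  forall v : 'cV[rat]_n, inL v -> isEven (bq (gramQ G) v v).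
Definition nondeg_gram n (G : 'M[int]_n) : Prop := \det G != 0.
Definition nde_lattice n (G : 'M[int]_n) : Prop :=
  sym_gram G /\ even_gram G /\ nondeg_gram G.

Definition inDual n (G : 'M[int]_n) (v : 'cV[rat]_n) : Prop :=
  forall w, inL w -> bq (gramQ G) v w \is a Num.int.

(* O(L): Q-linear extensions of isometries of L, i.e. invertible rational
   matrices mapping L onto L and preserving the form *)
Definition OL n (G : 'M[int]_n) (g : 'M[rat]_n) : Prop :=
  g \in unitmx /\
  (forall v, inL v -> inL (g *m v)) /\
  (forall w, inL w -> exists2 v, inL v & g *m v = w) /\
  (forall v w, inL v -> inL w -> bq (gramQ G) (g *m v) (g *m w) = bq (gramQ G) v w).

(* O(q(L)): automorphisms of A(L) = L^v/L preserving q(L), given by a map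
   f on representatives in L^v that is compatible with congruence mod L *)
Definition Oq n (G : 'M[int]_n) (f : 'cV[rat]_n -> 'cV[rat]_n) : Prop :=
  (forall x, inDual G x -> inDual G (f x)) /\
  (forall x y, inDual G x -> inDual G y -> inL (x - y) -> inL (f x - f y)) /\
  (forall x y, inDual G x -> inDual G y -> inL (f (x + y) - (f x + f y))) /\
  (forall x y, inDual G x -> inDual G y -> inL (f x - f y) -> inL (x - y)) /\
  (forall y, inDual G y -> exists2 x, inDual G x & inL (f x - y)) /\
  (forall x, inDual G x -> isEven (bq (gramQ G) (f x) (f x) - bq (gramQ G) x x)).

Definition induces n (g : 'M[rat]_n) (f : 'cV[rat]_n -> 'cV[rat]_n) (G : 'M[int]_n) : Prop :=
  forall x, inDual G x -> inL (g *m x - f x).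

Definition OL_onto_Oq n (G : 'M[int]_n) : Prop :=
  forall f, Oq G f -> exists2 g, OL G g & induces g f G.

Definition gram_sum n1 n2 (G1 : 'M[int]_n1) (G2 : 'M[int]_n2) : 'M[rat]_(n1 + n2) :=
  block_mx (gramQ G1) 0 0 (gramQ G2).

Definition inL1 n1 n2 (v : 'cV[rat]_(n1 + n2)) : Prop := inL (usubmx v) /\ dsubmx v = 0.
Definition inL2 n1 n2 (v : 'cV[rat]_(n1 + n2)) : Prop := usubmx v = 0 /\ inL (dsubmx v).

Definition primitive_in n (K Gam : 'cV[rat]_n -> Prop) : Prop :=
  forall v, Gam v -> forall k : nat, (0 < k)%N -> K (k%:R *: v) -> K v.

Definition good_overlattice n1 n2 (G1 : 'M[int]_n1) (G2 : 'M[int]_n2)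
    (Gam : 'cV[rat]_(n1 + n2) -> Prop) : Prop :=
  let B := bq (gram_sum G1 G2) in
  Gam 0 /\ (forall v w, Gam v -> Gam w -> Gam (v - w)) /\
  (forall v, Gam v -> inDual G1 (usubmx v) /\ inDual G2 (dsubmx v)) /\
  (forall v, inL1 v -> Gam v) /\ (forall v, inL2 v -> Gam v) /\
  primitive_in (@inL1 n1 n2) Gam /\ primitive_in (@inL2 n1 n2) Gam /\
  (forall v w, Gam v -> Gam w -> B v w \is a Num.int) /\
  (forall v, Gam v -> isEven (B v v)) /\
  (* unimodular: Gam^v = Gam *)
  (forall v, (forall w, Gam w -> B v w \is a Num.int) -> Gam v).

Definition OGam n (A : 'M[rat]_n) (Gam : 'cV[rat]_n -> Prop) (g : 'M[rat]_n) : Prop :=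
  g \in unitmx /\
  (forall v, Gam v -> Gam (g *m v)) /\
  (forall w, Gam w -> exists2 v, Gam v & g *m v = w) /\
  (forall v w, Gam v -> Gam w -> bq A (g *m v) (g *m w) = bq A v w).

Definition ess_unique n1 n2 (G1 : 'M[int]_n1) (G2 : 'M[int]_n2)
    (Gam : 'cV[rat]_(n1 + n2) -> Prop) : Prop :=
  forall Gam' : 'cV[rat]_(n1 + n2) -> Prop, good_overlattice G1 G2 Gam' ->
  exists phi1 : 'M[rat]_n1, exists phi2 : 'M[rat]_n2,
    [/\ OL G1 phi1, OL G2 phi2 &
      forall w, Gam' w <-> exists2 v, Gam v & block_mx phi1 0 0 phi2 *m v = w].

Definition restr_onto n1 n2 (G1 : 'M[int]_n1) (G2 : 'M[int]_n2)
    (Gam : 'cV[rat]_(n1 + n2) -> Prop) : Prop :=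
  forall h : 'M[rat]_n2, OL G2 h ->
  exists g : 'M[rat]_(n1 + n2),
    [/\ OGam (gram_sum G1 G2) Gam g,
        (forall v, inL2 v -> inL2 (g *m v)),
        (forall w, inL2 w -> exists2 v, inL2 v & g *m v = w) &
        forall y : 'cV[rat]_n2, inL y -> g *m col_mx 0 y = col_mx 0 (h *m y)].

From HB Require Import structures.
From mathcomp Require Import all_boot all_order all_algebra.
From mathcomp Require Import ring.
From Stdlib Require Import Classical ClassicalEpsilon.
Set Implicit Arguments. Unset Strict Implicit. Unset Printing Implicit Defensive.
Import Order.TTheory GRing.Theory Num.Theory.
Local Open Scope ring_scope.

(* If O(L1) -> O(q(L1)) is onto, take L2 = L1(-1) and glue along the diagonal
   Gam = {(x, y) in L1^v (+) L1^v : x - y in L1}.  Any other even unimodular gluing Gam' is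
   the graph of a map L1^v -> L1^v inducing an isometry of q(L1); a lift phi in O(L1) of it
   gives (1 (+) phi) Gam = Gam', and h (+) h extends h in O(L2) to Gam.
   Conversely, for f in O(q(L1)), replacing every glue partner (x0, y) in Gam by (f x0, y)
   yields another gluing Gam_f.  Essential uniqueness gives phi1 (+) phi2 mapping Gam onto
   Gam_f, and an extension g in O(Gam, L2) of phi2^-1 is block diagonal with an isometry g1
   of L1 in its corner, so phi1 g1 lifts f.
   Both directions use that the projection of Gam to L1 (x) Q is all of L1^v: it is a
   lattice between L1 and L1^v whose dual lies in L1, by unimodularity and primitivity. *)

Section IntegralMatrices.
Variables m n : nat.
Implicit Types M N : 'M[rat]_(m, n).

Lemma mxOver_intN M : M \is a mxOver Num.int -> - M \is a mxOver Num.int.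
Proof. by move=> /mxOverP hM; apply/mxOverP=> i j; rewrite mxE rpredN. Qed.

Lemma mxOver_intD M N :
  M \is a mxOver Num.int -> N \is a mxOver Num.int -> M + N \is a mxOver Num.int.
Proof. by move=> /mxOverP hM /mxOverP hN; apply/mxOverP=> i j; rewrite mxE rpredD. Qed.

Lemma mxOver_intZ (z : int) M : M \is a mxOver Num.int -> z%:~R *: M \is a mxOver Num.int.
Proof. by move=> /mxOverP hM; apply/mxOverP=> i j; rewrite mxE rpredM ?rpred_int. Qed.

Lemma mxOver_int_map (M : 'M[int]_(m, n)) : map_mx (intr : int -> rat) M \is a mxOver Num.int.
Proof. by apply/mxOverP=> i j; rewrite mxE rpred_int. Qed.

Lemma mxOver_int_lift M :
  M \is a mxOver Num.int -> exists Mz : 'M[int]_(m, n), M = map_mx (intr : int -> rat) Mz.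
Proof.
move=> /mxOverP hM; exists (map_mx Num.floor M).
by apply/matrixP=> i j; rewrite !mxE; apply/esym/eqP; rewrite -intrEfloor.
Qed.

End IntegralMatrices.

Lemma mxOver_col_mx (T : Type) (S : {pred T}) m n1 n2 (x : 'M[T]_(n1, m)) (y : 'M[T]_(n2, m)) :
  (col_mx x y \is a mxOver S) = (x \is a mxOver S) && (y \is a mxOver S).
Proof.
apply/mxOverP/andP => [h | [/mxOverP hx /mxOverP hy] i j].
  by split; apply/mxOverP=> i j; [have := h (lshift _ i) j | have := h (rshift _ i) j];
    rewrite ?col_mxEu ?col_mxEd.
by rewrite mxE; case: splitP => k _; [exact: hx | exact: hy].
Qed.

Lemma mxOver_trmx (T : Type) (S : {pred T}) m n (M : 'M[T]_(m, n)) :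
  (M^T \is a mxOver S) = (M \is a mxOver S).
Proof. by apply/mxOverP/mxOverP=> h i j; [have := h j i | ]; rewrite mxE. Qed.

Section Vectors.
Variable n : nat.
Implicit Types v w : 'cV[rat]_n.

Lemma inLP v : inL v <-> v \is a mxOver Num.int.
Proof. by split=> [h | /mxOverP h i]; [apply/mxOverP=> i j; rewrite (ord1 j) | exact: h]. Qed.

Lemma inL0 : inL (0 : 'cV[rat]_n).
Proof. by move=> i; rewrite mxE. Qed.

Lemma inLD v w : inL v -> inL w -> inL (v + w).
Proof. by move=> /inLP hv /inLP hw; apply/inLP/mxOver_intD. Qed.

Lemma inLN v : inL v -> inL (- v).
Proof. by move=> /inLP hv; apply/inLP/mxOver_intN. Qed.

Lemma inLB v w : inL v -> inL w -> inL (v - w).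
Proof. by move=> hv hw; apply/inLD/inLN. Qed.

Lemma inLZ (z : int) v : inL v -> inL (z%:~R *: v).
Proof. by move=> /inLP hv; apply/inLP/mxOver_intZ. Qed.

Lemma inL_delta (i : 'I_n) : inL (delta_mx i ord0 : 'cV[rat]_n).
Proof. by move=> k; rewrite mxE; case: (_ && _). Qed.

(* Representatives [a / D], with [0 <= a_i < D], of [(D^-1 Z^n) / Z^n]. *)
Definition frac_vec (D : nat) (a : 'cV['I_D]_n) : 'cV[rat]_n :=
  D%:R^-1 *: map_mx (fun i : 'I_D => (i : nat)%:R) a.

Lemma frac_vec_decomp (D : nat) v : (0 < D)%N -> inL (D%:R *: v) ->
  exists a : 'cV['I_D]_n, inL (v - frac_vec a).
Proof.
move=> D0 /inLP /mxOver_int_lift [uz euz].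
have DZ0 : D%:Z != 0 by rewrite -lt0n.
have DQ0 : (D%:R : rat) != 0 by rewrite pnatr_eq0 -lt0n.
have rlt i : (`|(uz i ord0 %% D)%Z| < D)%N.
  by rewrite -ltz_nat gez0_abs ?modz_ge0 // ltz_mod.
exists (\col_i Ordinal (rlt i)) => i; rewrite !mxE.
have -> : v i ord0 = (uz i ord0)%:~R / D%:R.
  by have := congr1 (fun M : 'cV[rat]_n => M i ord0) euz; rewrite !mxE => <-; rewrite mulrC mulKf.
rewrite natr_absz ger0_norm ?modz_ge0 // {1}(divz_eq (uz i ord0) D) intrD intrM.
by rewrite mulrDl mulfK // [_^-1 * _]mulrC addrK rpred_int.
Qed.

End Vectors.

Lemma inL_col n1 n2 (x : 'cV[rat]_n1) (y : 'cV[rat]_n2) : inL (col_mx x y) <-> inL x /\ inL y.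
Proof.
rewrite inLP mxOver_col_mx; split=> [/andP [hx hy] | [/inLP -> /inLP ->] //].
by split; apply/inLP.
Qed.

Section BilinearForm.
Variables (n : nat) (A : 'M[rat]_n).
Implicit Types u v w : 'cV[rat]_n.

Lemma bqDl u v w : bq A (u + v) w = bq A u w + bq A v w.
Proof. by rewrite /bq linearD /= !mulmxDl mxE. Qed.

Lemma bqDr u v w : bq A w (u + v) = bq A w u + bq A w v.
Proof. by rewrite /bq mulmxDr mxE. Qed.

Lemma bqNl v w : bq A (- v) w = - bq A v w.
Proof. by rewrite /bq linearN /= !mulNmx mxE. Qed.

Lemma bqNr v w : bq A w (- v) = - bq A w v.
Proof. by rewrite /bq mulmxN mxE. Qed.

Lemma bqBl u v w : bq A (u - v) w = bq A u w - bq A v w.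
Proof. by rewrite bqDl bqNl. Qed.

Lemma bqBr u v w : bq A w (u - v) = bq A w u - bq A w v.
Proof. by rewrite bqDr bqNr. Qed.

Lemma bq0l w : bq A 0 w = 0.
Proof. by rewrite /bq trmx0 !mul0mx mxE. Qed.

Lemma bq0r w : bq A w 0 = 0.
Proof. by rewrite /bq mulmx0 mxE. Qed.

Lemma bq_sym v w : A^T = A -> bq A v w = bq A w v.
Proof.
move=> sA; rewrite /bq.
have -> : (v^T *m A *m w) ord0 ord0 = (v^T *m A *m w)^T ord0 ord0 by rewrite [RHS]mxE.
by rewrite !trmx_mul trmxK sA mulmxA.
Qed.

Lemma bq_diff x x' y y' : bq A x x' - bq A y y' = bq A (x - y) x' + bq A y (x' - y').
Proof. by rewrite bqBl bqBr addrA subrK. Qed.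

Lemma bq_delta i j : bq A (delta_mx i ord0) (delta_mx j ord0) = A i j.
Proof. by rewrite /bq -colE mxE trmx_delta -rowE mxE. Qed.

Lemma bq_mulmx (g : 'M[rat]_n) v w : bq A (g *m v) (g *m w) = bq (g^T *m A *m g) v w.
Proof. by rewrite /bq trmx_mul !mulmxA. Qed.

End BilinearForm.

Lemma bq_oppmx n (A : 'M[rat]_n) v w : bq (- A) v w = - bq A v w.
Proof. by rewrite /bq mulmxN mulNmx mxE. Qed.

Lemma bq_eq_mx n (A B : 'M[rat]_n) :
  (forall i j, bq A (delta_mx i ord0) (delta_mx j ord0) =
              bq B (delta_mx i ord0) (delta_mx j ord0)) ->
  A = B.
Proof. by move=> h; apply/matrixP=> i j; rewrite -bq_delta h bq_delta. Qed.

Section Lattice.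
Variables (n : nat) (G : 'M[int]_n).
Local Notation A := (gramQ G).
Implicit Types u v w : 'cV[rat]_n.

Lemma gramQ_tr : sym_gram G -> A^T = A.
Proof. by move=> sG; rewrite /gramQ map_trmx sG. Qed.

Lemma gramQ_unit : nondeg_gram G -> A \in unitmx.
Proof. by move=> h; rewrite unitmxE /gramQ det_map_mx unitfE intr_eq0. Qed.

Lemma bq_gramQ_int v w : inL v -> inL w -> bq A v w \is a Num.int.
Proof.
move=> /inLP hv /inLP hw; suff /mxOverP : v^T *m A *m w \is a mxOver Num.int by apply.
by rewrite !mxOverM ?mxOver_int_map // mxOver_trmx.
Qed.

Lemma inDualE v : sym_gram G -> inDual G v <-> inL (A *m v).
Proof.
move=> sG; split=> [hv i | /inLP hAv w /inLP hw].
  by have := hv _ (inL_delta i); rewrite bq_sym ?gramQ_tr // /bq trmx_delta -rowE -row_mul mxE.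
rewrite bq_sym ?gramQ_tr // /bq -mulmxA.
suff /mxOverP : w^T *m (A *m v) \is a mxOver Num.int by apply.
by rewrite mxOverM ?mxOver_trmx.
Qed.

Lemma inL_dual v : sym_gram G -> inL v -> inDual G v.
Proof. by move=> sG hv w hw; apply: bq_gramQ_int. Qed.

Lemma dual0 : inDual G 0.
Proof. by move=> w _; rewrite bq0l. Qed.

Lemma dualD v w : inDual G v -> inDual G w -> inDual G (v + w).
Proof. by move=> hv hw u hu; rewrite bqDl rpredD ?hv ?hw. Qed.

Lemma dualN v : inDual G v -> inDual G (- v).
Proof. by move=> hv u hu; rewrite bqNl rpredN hv. Qed.

Lemma dualB v w : inDual G v -> inDual G w -> inDual G (v - w).
Proof. by move=> hv hw; apply/dualD/dualN. Qed.

Lemma dual_scale_inL : nde_lattice G ->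
  exists2 k : nat, (0 < k)%N & forall v, inDual G v -> inL (k%:R *: v).
Proof.
case=> sG [_ nG]; exists (`|\det G| ^ 2)%N; first by rewrite expn_gt0 absz_gt0 nG.
move=> v /(inDualE _ sG) /inLP hAv.
have det_v : inL ((\det G)%:~R *: v).
  apply/inLP; have -> : (\det G)%:~R *: v = \adj A *m (A *m v).
    by rewrite mulmxA mul_adj_mx /gramQ det_map_mx mul_scalar_mx.
  by rewrite mxOverM // /gramQ -map_mx_adj mxOver_int_map.
have -> : ((`|\det G| ^ 2)%N%:R : rat) = (\det G)%:~R * (\det G)%:~R.
  by rewrite natrX natr_absz intr_norm real_normK ?num_real // expr2.
by rewrite -scalerA; apply: inLZ.
Qed.

Lemma dual_dual_inL u : nde_lattice G ->
  (forall z, inDual G z -> bq A u z \is a Num.int) -> inL u.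
Proof.
case=> sG [_ nG] hu i.
have Au := gramQ_unit nG.
have hz : inDual G (invmx A *m delta_mx i ord0).
  by apply/(inDualE _ sG); rewrite mulmxA mulmxV // mul1mx; apply: inL_delta.
by have := hu _ hz; rewrite /bq !mulmxA mulmxK // -colE !mxE.
Qed.

End Lattice.

(** * Lattices between [L] and [D^-1 L] have bases *)

Lemma mulmx_sum_col m n (M : 'M[rat]_(m, n)) (c : 'cV[rat]_n) :
  M *m c = \sum_j c j ord0 *: col j M.
Proof.
apply/matrixP=> i k; rewrite mxE summxE; apply: eq_bigr => j _.
by rewrite !mxE (ord1 k) mulrC.
Qed.

Definition int_span n k (N : 'M[rat]_(n, k)) (v : 'cV[rat]_n) : Prop :=
  exists2 c, inL c & v = N *m c.

Lemma int_span_square n k (D : nat) (N : 'M[rat]_(n, n + k)) :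
  (0 < D)%N -> D%:R *: N \is a mxOver Num.int ->
  exists P : 'M[rat]_n, forall v, int_span N v <-> int_span P v.
Proof.
move=> D_gt0 /mxOver_int_lift [Nz eNz].
have [Lz _ [Rz Ru [d _ eN]]] := int_Smith_normal_form Nz.
pose mp m1 m2 (M : 'M[int]_(m1, m2)) : 'M[rat]_(m1, m2) := map_mx intr M.
have mpM m1 m2 m3 (M1 : 'M[int]_(m1, m2)) (M2 : 'M[int]_(m2, m3)) :
  mp _ _ (M1 *m M2) = mp _ _ M1 *m mp _ _ M2 by rewrite /mp map_mxM.
have mpZ m1 m2 (M : 'M[int]_(m1, m2)) : mp _ _ M \is a mxOver Num.int by apply: mxOver_int_map.
pose Dm : 'M[int]_(n, n + k) := \matrix_(i, j) (d`_i *+ (i == j :> nat)).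
have DmE : mp _ _ Dm = row_mx (mp _ _ (lsubmx Dm)) 0.
  rewrite -[in LHS](hsubmxK Dm) /mp map_row_mx; congr row_mx.
  by apply/matrixP=> i j; rewrite !mxE ltn_eqF ?mulr0n // ltn_addr.
have DQ0 : (D%:R : rat) != 0 by rewrite pnatr_eq0 -lt0n.
have NE : N = D%:R^-1 *: (mp _ _ Lz *m mp _ _ Dm *m mp _ _ Rz).
  by rewrite -!mpM /Dm -eN /mp -eNz scalerA mulVf // scale1r.
(* Only the first [n] columns of the Smith form survive, and [Rz] is unimodular. *)
exists (D%:R^-1 *: (mp _ _ Lz *m mp _ _ (lsubmx Dm))) => v.
split=> [[c /inLP hc ->] | [a /inLP ha ->]].
  exists (usubmx (mp _ _ Rz *m c)).
    have /inL_col [] // : inL (col_mx (usubmx (mp _ _ Rz *m c)) (dsubmx (mp _ _ Rz *m c))).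
    by rewrite vsubmxK; apply/inLP; rewrite mxOverM.
  rewrite NE -!scalemxAl -!mulmxA; congr (_ *: (_ *m _)).
  by rewrite -{1}[mp _ _ Rz *m c]vsubmxK DmE mul_row_col mul0mx addr0.
exists (mp _ _ (invmx Rz) *m col_mx a 0).
  by apply/inLP; rewrite mxOverM // mxOver_col_mx ha mxOver0 ?rpred0.
rewrite NE -!scalemxAl -!mulmxA; congr (_ *: (_ *m _)).
rewrite (mulmxA (mp _ _ Rz)) -mpM mulmxV // /mp map_mx1 mul1mx.
by rewrite -/(mp _ _ Dm) DmE mul_row_col mul0mx addr0.
Qed.

Lemma int_span_unitmx n (P : 'M[rat]_n) : (forall v, inL v -> int_span P v) -> P \in unitmx.
Proof.
move=> hP; have /fin_all_exists2 [q _ hq] : forall j : 'I_n,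
    exists2 a, inL a & (delta_mx j ord0 : 'cV[rat]_n) = P *m a.
  by move=> j; apply/hP/inL_delta.
suff /mulmx1_unit [] : P *m \matrix_(i, j) q j i ord0 = 1%:M by [].
apply/matrixP=> i j; have := congr1 (fun v : 'cV[rat]_n => v i ord0) (hq j).
by rewrite !mxE eqxx andbT => ->; apply: eq_bigr => l _; rewrite !mxE.
Qed.

Section Subgroup.
Variables (n : nat) (S : 'cV[rat]_n -> Prop).
Hypotheses (S0 : S 0) (SB : forall v w, S v -> S w -> S (v - w)).

Lemma subgrpN v : S v -> S (- v).
Proof. by rewrite -sub0r; apply: SB. Qed.

Lemma subgrpD v w : S v -> S w -> S (v + w).
Proof. by move=> hv hw; rewrite -[w]opprK; apply/SB/subgrpN. Qed.

Lemma subgrp_intZ (z : int) v : S v -> S (z%:~R *: v).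
Proof.
have natZ (k : nat) : S v -> S (k%:R *: v).
  by move=> hv; elim: k => [|k ih]; rewrite ?scale0r // mulrS scalerDl scale1r; apply: subgrpD.
case: z => k hv; first by rewrite -pmulrn; apply: natZ.
by rewrite NegzE mulrNz scaleNr -pmulrn; apply/subgrpN/natZ.
Qed.

Lemma subgrp_mulmx m (M : 'M[rat]_(n, m)) c :
  (forall j, S (col j M)) -> inL c -> S (M *m c).
Proof.
move=> hM hc; rewrite mulmx_sum_col; apply: (big_ind S) => // [v w|j _]; first exact: subgrpD.
by have /intrP [z ->] := hc j; apply: subgrp_intZ.
Qed.

Hypothesis SL : forall v, inL v -> S v.
Variable D : nat.
Hypothesis D_gt0 : (0 < D)%N.
Hypothesis S_scale : forall v, S v -> inL (D%:R *: v).

(* The generators are the unit vectors and those [frac_vec a] that lie in [S]. *)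
Lemma subgrp_generators : exists k (N : 'M[rat]_(n, n + k)),
  D%:R *: N \is a mxOver Num.int /\ forall v, S v <-> int_span N v.
Proof.
have DQ0 : (D%:R : rat) != 0 by rewrite pnatr_eq0 -lt0n.
have /fin_all_exists [b hb] : forall a : 'cV['I_D]_n, exists u : 'cV[rat]_n,
    S (frac_vec a) /\ u = frac_vec a \/ ~ S (frac_vec a) /\ u = 0.
  move=> a; case: (classic (S (frac_vec a))) => ha.
  - by exists (frac_vec a); left.
  - by exists 0; right.
have Sb a : S (b a) by case: (hb a) => -[? ->].
pose B : 'M[rat]_(n, #|{: 'cV['I_D]_n}|) := \matrix_(i, j) b (enum_val j) i ord0.
have colB j : col j B = b (enum_val j) by apply/matrixP=> i k; rewrite !mxE (ord1 k).
exists #|{: 'cV['I_D]_n}|, (row_mx 1%:M B); split.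
  apply/mxOverP=> i j; rewrite !mxE; case: splitP => j' _; rewrite !mxE.
    by rewrite rpredM ?natr_int //; case: (_ == _).
  case: (hb (enum_val j')) => -[_ ->]; rewrite ?mxE ?mulr0 //.
  rewrite mulrA mulfV // mul1r; exact: natr_int.
move=> v; split=> [hv | [c /inLP hc ->]]; last first.
  move: hc; rewrite -[c]vsubmxK mxOver_col_mx mul_row_col mul1mx => /andP [/inLP hu /inLP hd].
  by apply: subgrpD; [apply: SL | apply: subgrp_mulmx => // j; rewrite colB].
have [a ha] := frac_vec_decomp D_gt0 (S_scale hv).
have Sa : S (frac_vec a).
  by have := SB hv (SL ha); rewrite opprB addrC subrK.
exists (col_mx (v - frac_vec a) (delta_mx (enum_rank a) ord0)).
  by apply/inLP; rewrite mxOver_col_mx; apply/andP; split; apply/inLP => //; apply: inL_delta.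
rewrite mul_row_col mul1mx -colE colB enum_rankK.
by case: (hb a) => [[_ ->] | [/(_ Sa)]]; rewrite ?subrK.
Qed.

Lemma subgrp_basis :
  exists2 P : 'M[rat]_n, P \in unitmx & forall v, S v <-> int_span P v.
Proof.
have [k [N [DN SN]]] := subgrp_generators.
have [P NP] := int_span_square D_gt0 DN.
exists P => [|v]; last by rewrite SN.
by apply: int_span_unitmx => v /SL /SN /NP.
Qed.

End Subgroup.

Lemma subgrp_contains_dual n (G : 'M[int]_n) (S : 'cV[rat]_n -> Prop) : nde_lattice G ->
  S 0 -> (forall v w, S v -> S w -> S (v - w)) ->
  (forall v, inL v -> S v) -> (forall v, S v -> inDual G v) ->
  (forall x, (forall s, S s -> bq (gramQ G) x s \is a Num.int) -> inL x) ->
  forall x, inDual G x -> S x.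
Proof.
move=> hG S0 SB SL SD S_dual x hx; have [sG [_ nG]] := hG.
have [k k_gt0 hk] := dual_scale_inL hG.
have [P Pu SP] := subgrp_basis S0 SB SL k_gt0 (fun v hv => hk v (SD v hv)).
pose A := gramQ G.
have PAu : P^T *m A \in unitmx by rewrite unitmx_mul unitmx_tr Pu gramQ_unit.
(* [z j] is the basis of the dual of [S] that is dual to the columns of [P]. *)
pose z (j : 'I_n) : 'cV[rat]_n := invmx (P^T *m A) *m delta_mx j ord0.
have bq_z j b : bq A (P *m b) (z j) = b j ord0.
  rewrite /bq /z trmx_mul -!mulmxA (mulmxA (P^T) A) (mulmxA (P^T *m A)) mulmxV //.
  by rewrite mul1mx -colE !mxE.
have zL j : inL (z j).
  by apply: S_dual => s /SP [a ha ->]; rewrite bq_sym ?gramQ_tr ?bq_z.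
apply/SP; exists (invmx P *m x); last by rewrite mulmxA mulmxV ?mul1mx.
by move=> j; rewrite -bq_z mulmxA mulmxV ?mul1mx //; apply: hx.
Qed.

(** * Even unimodular overlattices of [L1 (+) L2] *)

Lemma sub_col_mx m1 m2 n (x x' : 'M[rat]_(m1, n)) (y y' : 'M[rat]_(m2, n)) :
  col_mx x y - col_mx x' y' = col_mx (x - x') (y - y').
Proof. by rewrite opp_col_mx add_col_mx. Qed.

Lemma col_mx_all n1 n2 (P : 'cV[rat]_(n1 + n2) -> Prop) :
  (forall x y, P (col_mx x y)) -> forall v, P v.
Proof. by move=> h v; rewrite -[v]vsubmxK. Qed.

Section OrthogonalSum.
Variables (n1 n2 : nat) (G1 : 'M[int]_n1) (G2 : 'M[int]_n2).
Local Notation A12 := (gram_sum G1 G2).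
Implicit Types (x : 'cV[rat]_n1) (y : 'cV[rat]_n2).

Lemma bq_col_mx x y x' y' :
  bq A12 (col_mx x y) (col_mx x' y') = bq (gramQ G1) x x' + bq (gramQ G2) y y'.
Proof.
rewrite /bq /gram_sum tr_col_mx mul_row_block !mulmx0 !addr0 !add0r mul_row_col.
by rewrite mxE.
Qed.

Lemma inL1_col x y : inL1 (col_mx x y) <-> inL x /\ y = 0.
Proof. by rewrite /inL1 col_mxKu col_mxKd. Qed.

Lemma inL2_col x y : inL2 (col_mx x y) <-> x = 0 /\ inL y.
Proof. by rewrite /inL2 col_mxKu col_mxKd. Qed.

Lemma good_overlatticeI (Gam : 'cV[rat]_(n1 + n2) -> Prop) :
  Gam 0 -> (forall v w, Gam v -> Gam w -> Gam (v - w)) ->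
  (forall x y, Gam (col_mx x y) -> inDual G1 x /\ inDual G2 y) ->
  (forall x, inL x -> Gam (col_mx x 0)) -> (forall y, inL y -> Gam (col_mx 0 y)) ->
  (forall x, Gam (col_mx x 0) -> inL x) -> (forall y, Gam (col_mx 0 y) -> inL y) ->
  (forall v w, Gam v -> Gam w -> bq A12 v w \is a Num.int) ->
  (forall v, Gam v -> isEven (bq A12 v v)) ->
  (forall v, (forall w, Gam w -> bq A12 v w \is a Num.int) -> Gam v) ->
  good_overlattice G1 G2 Gam.
Proof.
move=> Gam0 GamB Gam_dual GamL1 GamL2 Gam_primitive1 Gam_primitive2 Gam_int Gam_even Gam_unimod.
have k_eq0 m (k : nat) (u : 'cV[rat]_m) : (0 < k)%N -> k%:R *: u = 0 -> u = 0.
  by move=> k_gt0 /eqP; rewrite scaler_eq0 pnatr_eq0 eqn0Ngt k_gt0 => /eqP.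
do 2 (split=> //); split; last split; last split; last split; last split; last by do !split.
- by apply: col_mx_all => x y; rewrite col_mxKu col_mxKd => /Gam_dual.
- by apply: col_mx_all => x y /inL1_col [/GamL1 hx ->].
- by apply: col_mx_all => x y /inL2_col [-> /GamL2 hy].
- apply: col_mx_all => x y hv k k_gt0; rewrite scale_col_mx !inL1_col.
  by case=> _ /(k_eq0 _ _ _ k_gt0) y0; subst y; split=> //; apply: Gam_primitive1.
- apply: col_mx_all => x y hv k k_gt0; rewrite scale_col_mx !inL2_col.
  by case=> /(k_eq0 _ _ _ k_gt0) x0 _; subst x; split=> //; apply: Gam_primitive2.
Qed.

Section GoodOverlattice.
Variable Gam : 'cV[rat]_(n1 + n2) -> Prop.
Hypotheses (hG1 : nde_lattice G1) (hG2 : nde_lattice G2).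
Hypothesis hGam : good_overlattice G1 G2 Gam.

Lemma Gam0 : Gam 0. Proof. by case: hGam. Qed.
Lemma GamB v w : Gam v -> Gam w -> Gam (v - w).
Proof. by case: hGam => _ [h _]; apply: h. Qed.
Lemma GamD v w : Gam v -> Gam w -> Gam (v + w).
Proof. exact: (subgrpD Gam0 GamB). Qed.
Lemma Gam_dual x y : Gam (col_mx x y) -> inDual G1 x /\ inDual G2 y.
Proof. by case: hGam => _ [_ [h _]] /h; rewrite col_mxKu col_mxKd. Qed.
Lemma GamL1 x : inL x -> Gam (col_mx x 0).
Proof. by case: hGam => _ [_ [_ [h _]]] hx; apply: h; rewrite inL1_col. Qed.
Lemma GamL2 y : inL y -> Gam (col_mx 0 y).
Proof. by case: hGam => _ [_ [_ [_ [h _]]]] hy; apply: h; rewrite inL2_col. Qed.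
Lemma Gam_int v w : Gam v -> Gam w -> bq A12 v w \is a Num.int.
Proof. by case: hGam => _ [_ [_ [_ [_ [_ [_ [h _]]]]]]]; apply: h. Qed.
Lemma Gam_even v : Gam v -> isEven (bq A12 v v).
Proof. by case: hGam => _ [_ [_ [_ [_ [_ [_ [_ [h _]]]]]]]]; apply: h. Qed.
Lemma Gam_unimod v : (forall w, Gam w -> bq A12 v w \is a Num.int) -> Gam v.
Proof. by case: hGam => _ [_ [_ [_ [_ [_ [_ [_ [_ h]]]]]]]]; apply: h. Qed.

Lemma Gam_inL v : inL v -> Gam v.
Proof.
move: v; apply: col_mx_all => x y /inL_col [hx hy].
by rewrite -[x]addr0 -[y]add0r -add_col_mx; apply: GamD; [apply: GamL1 | apply: GamL2].
Qed.

Lemma Gam_primitive1 x : Gam (col_mx x 0) -> inL x.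
Proof.
move=> hx; have [k k_gt0 hk] := dual_scale_inL hG1.
case: hGam => _ [_ [_ [_ [_ [p _]]]]].
have /inL1_col [] // : inL1 (col_mx x (0 : 'cV[rat]_n2)).
apply: (p _ hx k k_gt0); rewrite scale_col_mx scaler0 inL1_col.
by split=> //; apply/hk/(Gam_dual hx).1.
Qed.

Lemma Gam_primitive2 y : Gam (col_mx 0 y) -> inL y.
Proof.
move=> hy; have [k k_gt0 hk] := dual_scale_inL hG2.
case: hGam => _ [_ [_ [_ [_ [_ [p _]]]]]].
have /inL2_col [] // : inL2 (col_mx (0 : 'cV[rat]_n1) y).
apply: (p _ hy k k_gt0); rewrite scale_col_mx scaler0 inL2_col.
by split=> //; apply/hk/(Gam_dual hy).2.
Qed.

Lemma Gam_glue_inL1 x x' y : Gam (col_mx x y) -> Gam (col_mx x' y) -> inL (x - x').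
Proof. by move=> h h'; apply: Gam_primitive1; rewrite -(subrr y) -sub_col_mx; apply: GamB. Qed.

Lemma Gam_glue_inL2 x y y' : Gam (col_mx x y) -> Gam (col_mx x y') -> inL (y - y').
Proof. by move=> h h'; apply: Gam_primitive2; rewrite -(subrr x) -sub_col_mx; apply: GamB. Qed.

Lemma Gam_proj1 x : inDual G1 x -> exists y, Gam (col_mx x y).
Proof.
apply: (@subgrp_contains_dual _ G1 (fun x => exists y, Gam (col_mx x y)) hG1).
- by exists 0; rewrite col_mx0; apply: Gam0.
- by move=> v w [y hy] [y' hy']; exists (y - y'); rewrite -sub_col_mx; apply: GamB.
- by move=> v hv; exists 0; apply: GamL1.
- by move=> v [y /Gam_dual []].
move=> z hz; apply: Gam_primitive1; apply: Gam_unimod; apply: col_mx_all => u y hw.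
by rewrite bq_col_mx bq0l addr0; apply: hz; exists y.
Qed.

Lemma Gam_proj2 y : inDual G2 y -> exists x, Gam (col_mx x y).
Proof.
apply: (@subgrp_contains_dual _ G2 (fun y => exists x, Gam (col_mx x y)) hG2).
- by exists 0; rewrite col_mx0; apply: Gam0.
- by move=> v w [x hx] [x' hx']; exists (x - x'); rewrite -sub_col_mx; apply: GamB.
- by move=> v hv; exists 0; apply: GamL2.
- by move=> v [x /Gam_dual []].
move=> z hz; apply: Gam_primitive2; apply: Gam_unimod; apply: col_mx_all => x u hw.
by rewrite bq_col_mx bq0l add0r; apply: hz; exists x.
Qed.

Lemma Gam_glue_map :
  exists f : 'cV[rat]_n1 -> 'cV[rat]_n2, forall x, inDual G1 x -> Gam (col_mx x (f x)).
Proof.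
exists (fun x => epsilon (inhabits 0) (fun y => Gam (col_mx x y))) => x /Gam_proj1 hx.
exact: (epsilon_spec (inhabits 0) (fun y => Gam (col_mx x y))).
Qed.

End GoodOverlattice.
End OrthogonalSum.

Section Isometries.
Variables (n : nat) (G : 'M[int]_n).
Local Notation A := (gramQ G).
Implicit Types (g h : 'M[rat]_n) (v w : 'cV[rat]_n).

Lemma isometry_mx (M g : 'M[rat]_n) :
  (forall v w, inL v -> inL w -> bq M (g *m v) (g *m w) = bq M v w) -> g^T *m M *m g = M.
Proof. by move=> h; apply: bq_eq_mx => i j; rewrite -bq_mulmx h //; apply: inL_delta. Qed.

Lemma OL_bq g v w : OL G g -> bq A (g *m v) (g *m w) = bq A v w.
Proof. by case=> _ [_ [_ h]]; rewrite bq_mulmx isometry_mx. Qed.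

Lemma OL_inL g v : OL G g -> inL v -> inL (g *m v).
Proof. by case=> _ [h _]; apply: h. Qed.

Lemma OL_inv_inL g v : OL G g -> inL v -> inL (invmx g *m v).
Proof. by case=> gu [_ [h _]] /h [u hu <-]; rewrite mulKmx. Qed.

Lemma OL_inv g : OL G g -> OL G (invmx g).
Proof.
move=> Og; have gu := Og.1; split; first by rewrite unitmx_inv.
split; first by move=> v; apply: OL_inv_inL.
split; first by move=> w hw; exists (g *m w); [apply: OL_inL | rewrite mulKmx].
by move=> v w _ _; rewrite -(OL_bq _ _ Og) !mulKVmx.
Qed.

Lemma OL_mul g h : OL G g -> OL G h -> OL G (g *m h).
Proof.
move=> Og Oh; split; first by rewrite unitmx_mul Og.1 Oh.1.
split; first by move=> v hv; rewrite -mulmxA; do 2 apply: OL_inL => //.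
split; last by move=> v w _ _; rewrite -!mulmxA !OL_bq.
move=> w hw; exists (invmx h *m (invmx g *m w)); first by do 2 apply: OL_inv_inL => //.
by rewrite -mulmxA mulKVmx ?Oh.1 // mulKVmx ?Og.1.
Qed.

Lemma OL1 : OL G 1%:M.
Proof.
split; first exact: unitmx1.
split; first by move=> v; rewrite mul1mx.
by split=> [w hw | v w _ _]; [exists w; rewrite ?mul1mx | rewrite !mul1mx].
Qed.

Lemma OL_dual g x : OL G g -> inDual G x -> inDual G (g *m x).
Proof.
move=> Og hx w hw; rewrite -[w](mulKVmx Og.1) OL_bq //.
by apply: hx; apply: OL_inv_inL.
Qed.

End Isometries.

Section OppositeLattice.
Variables (n : nat) (G : 'M[int]_n).

Lemma gramQN : gramQ (- G) = - gramQ G.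
Proof. by apply/matrixP=> i j; rewrite !mxE intrN. Qed.

Lemma inDualN x : inDual (- G) x <-> inDual G x.
Proof. by split=> h w hw; move: (h w hw); rewrite ?gramQN ?bq_oppmx rpredN. Qed.

Lemma OL_opp g : OL (- G) g <-> OL G g.
Proof.
rewrite /OL gramQN; split=> -[gu [gL [gS gbq]]]; do 3 (split=> //);
  move=> v w hv hw; have := gbq v w hv hw; rewrite !bq_oppmx; [apply: oppr_inj | by move=> ->].
Qed.

End OppositeLattice.

Lemma isEvenN x : isEven x -> isEven (- x).
Proof. by rewrite /isEven mulNr rpredN. Qed.

Lemma isEvenD x y : isEven x -> isEven y -> isEven (x + y).
Proof. by rewrite /isEven mulrDl; apply: rpredD. Qed.

Lemma isEvenB x y : isEven x -> isEven y -> isEven (x - y).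
Proof. by move=> hx hy; apply/isEvenD/isEvenN. Qed.

Lemma isEven_double x : isEven (x + x) <-> x \is a Num.int.
Proof. by rewrite /isEven -mulr2n -[x *+ 2]mulr_natr mulfK. Qed.

Lemma nde_lattice_opp n (G : 'M[int]_n) : nde_lattice G -> nde_lattice (- G).
Proof.
case=> sG [eG nG]; split; first by rewrite /sym_gram linearN /= sG.
split; first by move=> v hv; rewrite gramQN bq_oppmx; apply/isEvenN/eG.
by rewrite /nondeg_gram -scaleN1r detZ mulf_neq0 // expf_neq0 // oppr_eq0 oner_eq0.
Qed.

(** * The diagonal gluing of [L] and [L(-1)] *)

Lemma block_diag_mul n1 n2 (a : 'M[rat]_n1) (b : 'M[rat]_n2) (x : 'cV[rat]_n1) (y : 'cV[rat]_n2) :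
  block_mx a 0 0 b *m col_mx x y = col_mx (a *m x) (b *m y).
Proof. by rewrite mul_block_col !mul0mx addr0 add0r. Qed.

Definition diag_glue n (G : 'M[int]_n) (v : 'cV[rat]_(n + n)) : Prop :=
  inDual G (usubmx v) /\ inDual G (dsubmx v) /\ inL (usubmx v - dsubmx v).

Section DiagonalGluing.
Variables (n : nat) (G : 'M[int]_n).
Hypothesis hG : nde_lattice G.
Local Notation A := (gramQ G).
Local Notation Gd := (@diag_glue n G).
Implicit Types x y : 'cV[rat]_n.

Let sG : sym_gram G := hG.1.

Lemma diag_glue_col x y : Gd (col_mx x y) <-> [/\ inDual G x, inDual G y & inL (x - y)].
Proof. by rewrite /diag_glue col_mxKu col_mxKd; split=> [[? []] | []]. Qed.

Lemma bq_col_mx_opp x y x' y' :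
  bq (gram_sum G (- G)) (col_mx x y) (col_mx x' y') = bq A x x' - bq A y y'.
Proof. by rewrite bq_col_mx gramQN bq_oppmx. Qed.

Lemma diag_glue_unimod v :
  (forall w, Gd w -> bq (gram_sum G (- G)) v w \is a Num.int) -> Gd v.
Proof.
have dL := inL_dual sG.
move: v; apply: col_mx_all => x y hxy.
have hx : inDual G x.
  move=> l hl; have hw : Gd (col_mx l 0).
    by apply/diag_glue_col; rewrite subr0; split; [apply: dL | apply: dual0 |].
  by have := hxy _ hw; rewrite bq_col_mx_opp bq0r subr0.
have hy : inDual G y.
  move=> l hl; have hw : Gd (col_mx 0 l).
    by apply/diag_glue_col; rewrite sub0r; split; [apply: dual0 | apply: dL | apply: inLN].
  by have := hxy _ hw; rewrite bq_col_mx_opp bq0r sub0r rpredN.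
apply/diag_glue_col; split=> //; apply: (dual_dual_inL hG) => z hz.
have hw : Gd (col_mx z z) by apply/diag_glue_col; rewrite subrr; split=> //; apply: inL0.
by have := hxy _ hw; rewrite bq_col_mx_opp bqBl.
Qed.

Lemma diag_glue_good : good_overlattice G (- G) Gd.
Proof.
have dL := inL_dual sG.
apply: good_overlatticeI.
- rewrite -col_mx0; apply/diag_glue_col; rewrite subrr.
  by split; [apply: dual0 | apply: dual0 | apply: inL0].
- apply: col_mx_all => x y; apply: col_mx_all => x' y'; rewrite sub_col_mx !diag_glue_col.
  case=> hx hy hl [hx' hy' hl']; split; try exact: dualB.
  have -> : x - x' - (y - y') = (x - y) - (x' - y').
    by rewrite !opprB addrACA [RHS]addrACA [- y - x']addrC.
  exact: inLB.
- by move=> x y /diag_glue_col [hx hy _]; split=> //; apply/(inDualN G y).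
- by move=> x hx; apply/diag_glue_col; rewrite subr0; split; [apply: dL | apply: dual0 |].
- move=> y hy; apply/diag_glue_col; rewrite sub0r.
  by split; [apply: dual0 | apply: dL | apply: inLN].
- by move=> x /diag_glue_col [_ _]; rewrite subr0.
- by move=> y /diag_glue_col [_ _]; rewrite sub0r => /inLN; rewrite opprK.
- apply: col_mx_all => x y; apply: col_mx_all => x' y'; rewrite !diag_glue_col bq_col_mx_opp.
  case=> hx hy hl [hx' hy' hl']; rewrite bq_diff rpredD ?hy //.
  by rewrite bq_sym ?gramQ_tr // hx'.
- apply: col_mx_all => x y; rewrite diag_glue_col bq_col_mx_opp => -[hx hy hl].
  rewrite bq_diff; set l := x - y.
  have -> : x = l + y by rewrite subrK.
  rewrite bqDr -addrA [bq A l y]bq_sym ?gramQ_tr //.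
  by apply: isEvenD; [apply: hG.2.1 | apply/isEven_double/hy].
exact: diag_glue_unimod.
Qed.

Section GlueMap.
Variable Gam : 'cV[rat]_(n + n) -> Prop.
Hypothesis hGam : good_overlattice G (- G) Gam.
Variable f : 'cV[rat]_n -> 'cV[rat]_n.
Hypothesis hf : forall x, inDual G x -> Gam (col_mx x (f x)).

Let hG' := nde_lattice_opp hG.

Lemma glue_map_sub x y : inDual G x -> inDual G y -> Gam (col_mx (x - y) (f x - f y)).
Proof. by move=> hx hy; rewrite -sub_col_mx; exact: (GamB hGam (hf hx) (hf hy)). Qed.

Lemma glue_map_Oq : Oq G f.
Proof.
split; first by move=> x /hf /(Gam_dual hGam) [_ /(inDualN G (f x))].
split.
  move=> x y hx hy hl; rewrite -(subr0 (f x - f y)).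
  exact: (Gam_glue_inL2 hG' hGam (glue_map_sub hx hy) (GamL1 hGam hl)).
split.
  move=> x y hx hy; apply: (Gam_glue_inL2 hG' hGam (hf (dualD hx hy))).
  by rewrite -add_col_mx; apply: (GamD hGam (hf hx) (hf hy)).
split.
  move=> x y hx hy hl; rewrite -(subr0 (x - y)).
  exact: (Gam_glue_inL1 hG hGam (glue_map_sub hx hy) (GamL2 hGam hl)).
split.
  move=> y /(inDualN G y) /(Gam_proj2 hG' hGam) [x hx]; have [hxd _] := Gam_dual hGam hx.
  by exists x => //; apply: (Gam_glue_inL2 hG' hGam (hf hxd) hx).
move=> x /hf /(Gam_even hGam); rewrite bq_col_mx_opp => /isEvenN.
by rewrite opprB.
Qed.

End GlueMap.

Lemma diag_glue_ess_unique : OL_onto_Oq G -> ess_unique G (- G) Gd.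
Proof.
move=> OL_Oq Gam hGam.
have hG' := nde_lattice_opp hG.
have [f hf] := Gam_glue_map hG hGam.
have [phi Ophi phi_f] := OL_Oq f (glue_map_Oq hGam hf).
have phiu := Ophi.1.
exists 1%:M, phi; split; [exact: OL1 | exact/OL_opp | ].
apply: col_mx_all => x y; split.
  move=> hxy; have [hx /(inDualN G y) hy] := Gam_dual hGam hxy.
  exists (col_mx x (invmx phi *m y)); last by rewrite block_diag_mul mul1mx mulKVmx.
  apply/diag_glue_col; split=> //; first exact: (OL_dual (OL_inv Ophi) hy).
  rewrite -{1}(mulKmx phiu x) -mulmxBr; apply: (OL_inv_inL Ophi).
  have -> : phi *m x - y = (phi *m x - f x) - (y - f x) by rewrite opprB addrA subrK.
  by apply: inLB; [exact: (phi_f _ hx) | exact: (Gam_glue_inL2 hG' hGam hxy (hf _ hx))].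
case; apply: col_mx_all => x0 y0; rewrite block_diag_mul mul1mx diag_glue_col.
case=> hx hy hl <-.
have -> : col_mx x0 (phi *m y0) = col_mx x0 (f x0) + col_mx 0 (phi *m y0 - f x0).
  by rewrite add_col_mx addr0 addrC subrK.
apply: (GamD hGam (hf _ hx)); apply: (GamL2 hGam).
have -> : phi *m y0 - f x0 = phi *m x0 - f x0 - phi *m (x0 - y0).
  by rewrite mulmxBr opprB [RHS]addrC [RHS]addrA subrK.
by apply: inLB; [exact: (phi_f _ hx) | exact: (OL_inL Ophi hl)].
Qed.

Lemma diag_glue_restr_onto : restr_onto G (- G) Gd.
Proof.
move=> h /OL_opp Oh; have hu := Oh.1.
exists (block_mx h 0 0 h); split.
- split; first by rewrite unitmxE det_ublock unitrM -!unitmxE hu.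
  split.
    apply: col_mx_all => x y; rewrite block_diag_mul !diag_glue_col -mulmxBr.
    case=> hx hy hl.
    by split; [exact: (OL_dual Oh hx) | exact: (OL_dual Oh hy) | exact: (OL_inL Oh hl)].
  split.
    apply: col_mx_all => x y; rewrite diag_glue_col; case=> hx hy hl.
    exists (col_mx (invmx h *m x) (invmx h *m y)); last by rewrite block_diag_mul !mulKVmx.
    have Oi := OL_inv Oh.
    apply/diag_glue_col; rewrite -mulmxBr.
    by split; [exact: (OL_dual Oi hx) | exact: (OL_dual Oi hy) | exact: (OL_inv_inL Oh hl)].
  apply: col_mx_all => x y; apply: col_mx_all => x' y' _ _.
  by rewrite !block_diag_mul !bq_col_mx_opp !(OL_bq _ _ Oh).
- apply: col_mx_all => x y /inL2_col [-> hy].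
  by rewrite block_diag_mul mulmx0 inL2_col; split=> //; exact: (OL_inL Oh hy).
- apply: col_mx_all => x y /inL2_col [-> hy]; exists (col_mx 0 (invmx h *m y)).
    by rewrite inL2_col; split=> //; exact: (OL_inv_inL Oh hy).
  by rewrite block_diag_mul mulmx0 mulKVmx.
- by move=> y hy; rewrite block_diag_mul mulmx0.
Qed.

End DiagonalGluing.

Section OqFacts.
Variables (n : nat) (G : 'M[int]_n).
Hypothesis hG : nde_lattice G.
Local Notation A := (gramQ G).
Variable f : 'cV[rat]_n -> 'cV[rat]_n.
Hypothesis Of : Oq G f.
Implicit Types x y u : 'cV[rat]_n.

Let sG : sym_gram G := hG.1.

Lemma Oq_dual x : inDual G x -> inDual G (f x).
Proof. by case: Of => h _; apply: h. Qed.
Lemma Oq_congr x y : inDual G x -> inDual G y -> inL (x - y) -> inL (f x - f y).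
Proof. by case: Of => _ [h _]; apply: h. Qed.
Lemma Oq_add x y : inDual G x -> inDual G y -> inL (f (x + y) - (f x + f y)).
Proof. by case: Of => _ [_ [h _]]; apply: h. Qed.
Lemma Oq_inj x y : inDual G x -> inDual G y -> inL (f x - f y) -> inL (x - y).
Proof. by case: Of => _ [_ [_ [h _]]]; apply: h. Qed.
Lemma Oq_surj y : inDual G y -> exists2 x, inDual G x & inL (f x - y).
Proof. by case: Of => _ [_ [_ [_ [h _]]]]; apply: h. Qed.
Lemma Oq_q x : inDual G x -> isEven (bq A (f x) (f x) - bq A x x).
Proof. by case: Of => _ [_ [_ [_ [_ h]]]]; apply: h. Qed.

Lemma Oq_inL0 : inL (f 0).
Proof.
by have := Oq_add (dual0 G) (dual0 G); rewrite addr0 opprD addNKr => /inLN; rewrite opprK.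
Qed.

Lemma Oq_inL x : inL x -> inL (f x).
Proof.
move=> hx; rewrite -[f x](subrK (f 0)); apply: (inLD _ Oq_inL0).
by apply: Oq_congr; rewrite ?subr0 //; [apply: inL_dual | apply: dual0].
Qed.

Lemma Oq_sub x y : inDual G x -> inDual G y -> inL (f (x - y) - (f x - f y)).
Proof.
move=> hx hy; have := Oq_add (dualB hx hy) hy; rewrite subrK => /inLN.
by rewrite !opprD !opprK addrC -!addrA [f y - _]addrC.
Qed.

Lemma bq_dual_congr x x' u u' : inDual G u -> inDual G u' -> inL (x - u) -> inL (x' - u') ->
  bq A x x' - bq A u u' \is a Num.int.
Proof.
move=> hu hu' hxu hxu'.
have [l hl ->] : exists2 l, inL l & x = l + u by exists (x - u); rewrite ?subrK.
have [l' hl' ->] : exists2 l', inL l' & x' = l' + u' by exists (x' - u'); rewrite ?subrK.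
have -> : bq A (l + u) (l' + u') - bq A u u' = bq A l l' + bq A u' l + bq A u l'.
  by rewrite bqDl !bqDr [bq A l u']bq_sym ?gramQ_tr //; ring.
by rewrite !rpredD ?hu ?hu' ?bq_gramQ_int.
Qed.

Lemma q_dual_congr x u : inDual G u -> inL (x - u) -> isEven (bq A x x - bq A u u).
Proof.
move=> hu hxu; have [l hl ->] : exists2 l, inL l & x = l + u by exists (x - u); rewrite ?subrK.
have -> : bq A (l + u) (l + u) - bq A u u = bq A l l + (bq A u l + bq A u l).
  by rewrite bqDl !bqDr [bq A l u]bq_sym ?gramQ_tr //; ring.
by apply: isEvenD; [apply: hG.2.1 | apply/isEven_double/hu].
Qed.

Lemma bq_polar x y : bq A (x + y) (x + y) - bq A x x - bq A y y = bq A x y + bq A x y.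
Proof. by rewrite bqDl !bqDr [bq A y x]bq_sym ?gramQ_tr //; ring. Qed.

Lemma Oq_bq x y : inDual G x -> inDual G y -> bq A (f x) (f y) - bq A x y \is a Num.int.
Proof.
move=> hx hy; apply/isEven_double; have hxy := dualD hx hy.
have hfxy := q_dual_congr (dualD (Oq_dual hx) (Oq_dual hy)) (Oq_add hx hy).
have := isEvenB (isEvenB (isEvenD (isEvenN hfxy) (Oq_q hxy)) (Oq_q hx)) (Oq_q hy).
move/(@eq_ind _ _ isEven); apply.
have -> : bq A (f x) (f y) - bq A x y + (bq A (f x) (f y) - bq A x y) =
    (bq A (f x) (f y) + bq A (f x) (f y)) - (bq A x y + bq A x y) by ring.
by rewrite -!bq_polar; ring.
Qed.

End OqFacts.

(** * Twisting a gluing by an isometry of [q(L1)] *)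

(* [Gam] with the first coordinate of every glue partner moved by [f]. *)
Definition twist_glue n1 n2 (G1 : 'M[int]_n1) (f : 'cV[rat]_n1 -> 'cV[rat]_n1)
    (Gam : 'cV[rat]_(n1 + n2) -> Prop) (w : 'cV[rat]_(n1 + n2)) : Prop :=
  inDual G1 (usubmx w) /\ exists2 x0, Gam (col_mx x0 (dsubmx w)) & inL (usubmx w - f x0).

Section TwistedGluing.
Variables (n1 n2 : nat) (G1 : 'M[int]_n1) (G2 : 'M[int]_n2).
Variable Gam : 'cV[rat]_(n1 + n2) -> Prop.
Hypotheses (hG1 : nde_lattice G1) (hG2 : nde_lattice G2).
Hypothesis hGam : good_overlattice G1 G2 Gam.
Variable f : 'cV[rat]_n1 -> 'cV[rat]_n1.
Hypothesis Of : Oq G1 f.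
Local Notation A1 := (gramQ G1).
Local Notation Gf := (twist_glue G1 f Gam).
Implicit Types (x : 'cV[rat]_n1) (y : 'cV[rat]_n2).

Lemma twist_glue_col x y :
  Gf (col_mx x y) <-> inDual G1 x /\ exists2 x0, Gam (col_mx x0 y) & inL (x - f x0).
Proof. by rewrite /twist_glue col_mxKu col_mxKd. Qed.

Lemma twist_glue_partner x y : Gf (col_mx x y) ->
  exists x0, [/\ inDual G1 x, Gam (col_mx x0 y), inDual G1 x0 & inL (x - f x0)].
Proof.
by case/twist_glue_col=> hx [x0 hx0 hl]; exists x0; split=> //; apply: (Gam_dual hGam hx0).1.
Qed.

Lemma twist_glue_sub v w : Gf v -> Gf w -> Gf (v - w).
Proof.
move: v w; apply: col_mx_all => x y; apply: col_mx_all => x' y' hv hw.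
have [x0 [dx g0 d0 l0]] := twist_glue_partner hv.
have [x0' [dx' g0' d0' l0']] := twist_glue_partner hw.
rewrite sub_col_mx twist_glue_col; split; first exact: dualB.
exists (x0 - x0'); first by rewrite -sub_col_mx; exact: (GamB hGam g0 g0').
have -> : x - x' - f (x0 - x0') =
    (x - f x0) - (x' - f x0') - (f (x0 - x0') - (f x0 - f x0')).
  by apply/matrixP=> i j; rewrite !mxE; ring.
exact: (inLB (inLB l0 l0') (Oq_sub Of d0 d0')).
Qed.

Lemma twist_glue_L1 x : inL x -> Gf (col_mx x 0).
Proof.
move=> hx; apply/twist_glue_col; split; first exact: (inL_dual hG1.1 hx).
by exists 0; [rewrite col_mx0; exact: (Gam0 hGam) | exact: (inLB hx (Oq_inL0 Of))].
Qed.

Lemma twist_glue_L2 y : inL y -> Gf (col_mx 0 y).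
Proof.
move=> hy; apply/twist_glue_col; split; first exact: dual0.
by exists 0; [exact: (GamL2 hGam hy) | rewrite sub0r; apply/inLN/(Oq_inL0 Of)].
Qed.

Lemma twist_glue_int v w : Gf v -> Gf w -> bq (gram_sum G1 G2) v w \is a Num.int.
Proof.
move: v w; apply: col_mx_all => x y; apply: col_mx_all => x' y' hv hw.
have [x0 [dx g0 d0 l0]] := twist_glue_partner hv.
have [x0' [dx' g0' d0' l0']] := twist_glue_partner hw.
have -> : bq (gram_sum G1 G2) (col_mx x y) (col_mx x' y') =
    (bq A1 x x' - bq A1 (f x0) (f x0')) + (bq A1 (f x0) (f x0') - bq A1 x0 x0')
    + bq (gram_sum G1 G2) (col_mx x0 y) (col_mx x0' y') by rewrite !bq_col_mx; ring.
apply: rpredD; last exact: (Gam_int hGam g0 g0').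
apply: rpredD; last exact: (Oq_bq hG1 Of d0 d0').
exact: (bq_dual_congr hG1 (Oq_dual Of d0) (Oq_dual Of d0') l0 l0').
Qed.

Lemma twist_glue_even v : Gf v -> isEven (bq (gram_sum G1 G2) v v).
Proof.
move: v; apply: col_mx_all => x y hv; have [x0 [dx g0 d0 l0]] := twist_glue_partner hv.
have -> : bq (gram_sum G1 G2) (col_mx x y) (col_mx x y) =
    (bq A1 x x - bq A1 (f x0) (f x0)) + (bq A1 (f x0) (f x0) - bq A1 x0 x0)
    + bq (gram_sum G1 G2) (col_mx x0 y) (col_mx x0 y) by rewrite !bq_col_mx; ring.
apply: isEvenD; last exact: (Gam_even hGam g0).
by apply: isEvenD; [exact: (q_dual_congr hG1 (Oq_dual Of d0) l0) | exact: (Oq_q Of d0)].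
Qed.

Lemma twist_glue_unimod v : (forall w, Gf w -> bq (gram_sum G1 G2) v w \is a Num.int) -> Gf v.
Proof.
move: v; apply: col_mx_all => x y hxy.
have hx : inDual G1 x.
  by move=> l hl; have := hxy _ (twist_glue_L1 hl); rewrite bq_col_mx bq0r addr0.
have [x0 d0 l0] := Oq_surj Of hx.
apply/twist_glue_col; split=> //; exists x0; last by rewrite -opprB; apply: inLN.
apply: (Gam_unimod hGam); apply: col_mx_all => u z huz; have [du _] := Gam_dual hGam huz.
have hw : Gf (col_mx (f u) z).
  apply/twist_glue_col; split; first exact: (Oq_dual Of du).
  by exists u; rewrite ?subrr //; apply: inL0.
have -> : bq (gram_sum G1 G2) (col_mx x0 y) (col_mx u z) =
    - (bq A1 (f x0) (f u) - bq A1 x0 u) + bq A1 (f x0 - x) (f u)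
    + bq (gram_sum G1 G2) (col_mx x y) (col_mx (f u) z) by rewrite !bq_col_mx bqBl; ring.
apply: rpredD; last exact: (hxy _ hw).
apply: rpredD; first by rewrite rpredN; exact: (Oq_bq hG1 Of d0 du).
by rewrite bq_sym ?gramQ_tr //; [exact: (Oq_dual Of du) | case: hG1].
Qed.

Lemma twist_glue_good : good_overlattice G1 G2 Gf.
Proof.
apply: good_overlatticeI.
- by rewrite -col_mx0; apply: twist_glue_L1; apply: inL0.
- exact: twist_glue_sub.
- by move=> x y /twist_glue_partner [x0 [dx /(Gam_dual hGam) [_ dy] _ _]].
- exact: twist_glue_L1.
- exact: twist_glue_L2.
- move=> x /twist_glue_partner [x0 [dx g0 d0 l0]].
  have /(Oq_inL hG1 Of) fx0 := Gam_primitive1 hG1 hGam g0.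
  by rewrite -(subrK (f x0) x); apply: inLD.
- move=> y /twist_glue_partner [x0 [dx g0 d0 l0]].
  have fx0 : inL (f x0) by rewrite -[f x0]opprK; apply: inLN; rewrite -sub0r.
  have /(Oq_inj Of d0 (dual0 G1)) : inL (f x0 - f 0) := inLB fx0 (Oq_inL0 Of).
  rewrite subr0 => hx0; apply: (Gam_primitive2 hG2 hGam).
  by rewrite -(subrr x0) -[y]subr0 -sub_col_mx; exact: (GamB hGam g0 (GamL1 hGam hx0)).
- exact: twist_glue_int.
- exact: twist_glue_even.
- exact: twist_glue_unimod.
Qed.

End TwistedGluing.

Lemma mx_inL_ext m n (M N : 'M[rat]_(m, n)) : (forall y, inL y -> M *m y = N *m y) -> M = N.
Proof.
move=> h; apply/matrixP=> i j.
by have := congr1 (fun v : 'cV[rat]_m => v i ord0) (h _ (inL_delta j)); rewrite -!colE !mxE.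
Qed.

Lemma block_isometry_diag n1 n2 (A1 : 'M[rat]_n1) (A2 : 'M[rat]_n2) (g : 'M[rat]_(n1 + n2))
    (h : 'M[rat]_n2) : A2 \in unitmx -> h \in unitmx ->
  g^T *m block_mx A1 0 0 A2 *m g = block_mx A1 0 0 A2 ->
  (forall y, inL y -> g *m col_mx 0 y = col_mx 0 (h *m y)) ->
  g = block_mx (ulsubmx g) 0 0 h /\ (ulsubmx g)^T *m A1 *m ulsubmx g = A1.
Proof.
move=> A2u hu g_isom g_L2; set a := ulsubmx g; set c := dlsubmx g.
have gE : g = block_mx a (ursubmx g) c (drsubmx g) by rewrite submxK.
have g_col y : inL y -> ursubmx g *m y = 0 *m y /\ drsubmx g *m y = h *m y.
  move=> hy; have := g_L2 y hy; rewrite {1}gE mul_block_col !mulmx0 !add0r mul0mx.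
  by case/eq_col_mx.
rewrite (mx_inL_ext (fun y hy => (g_col y hy).1)) (mx_inL_ext (fun y hy => (g_col y hy).2)) in gE.
move: g_isom; rewrite gE tr_block_mx trmx0 !mulmx_block !mulmx0 !mul0mx !addr0 !add0r.
case/eq_block_mx => e11 _ e21 _.
have c0 : c = 0.
  have hA : h^T *m A2 \in unitmx by rewrite unitmx_mul unitmx_tr hu A2u.
  by move: e21; rewrite mul0mx add0r => e21; rewrite -(mulKmx hA c) e21 mulmx0.
by move: e11 gE; rewrite c0 trmx0 !mul0mx addr0.
Qed.

Section Converse.
Variables (n1 n2 : nat) (G1 : 'M[int]_n1) (G2 : 'M[int]_n2).
Variable Gam : 'cV[rat]_(n1 + n2) -> Prop.
Hypotheses (hG1 : nde_lattice G1) (hG2 : nde_lattice G2).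
Hypothesis hGam : good_overlattice G1 G2 Gam.

(* By primitivity [L1] is the part of [Gam] in the first summand, so it is preserved by
   block diagonal isometries of [Gam]. *)
Lemma OL_block_of_OGam g1 h : h \in unitmx ->
  OGam (gram_sum G1 G2) Gam (block_mx g1 0 0 h) -> g1^T *m gramQ G1 *m g1 = gramQ G1 ->
  OL G1 g1.
Proof.
move=> hu Og g1_isom; have [gu [g_in [g_onto _]]] := Og.
split; first by move: gu; rewrite unitmxE det_ublock unitrM -unitmxE => /andP [].
split.
  move=> v hv; apply: (Gam_primitive1 hG1 hGam).
  by have := g_in _ (GamL1 hGam hv); rewrite block_diag_mul mulmx0.
split; last by move=> v w _ _; rewrite bq_mulmx g1_isom.
move=> w hw; have [u hu' e] := g_onto _ (GamL1 hGam hw); move: u hu' e.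
apply: col_mx_all => x y hxy; rewrite block_diag_mul => /eq_col_mx [ex ey].
have y0 : y = 0 by rewrite -(mulKmx hu y) ey mulmx0.
by exists x => //; apply: (Gam_primitive1 hG1 hGam); rewrite -y0.
Qed.

Lemma OL_onto_Oq_of_glue : ess_unique G1 G2 Gam -> restr_onto G1 G2 Gam -> OL_onto_Oq G1.
Proof.
move=> hE hR f Of.
have [phi1 [phi2 [O1 O2 Gf_E]]] := hE _ (twist_glue_good hG1 hG2 hGam Of).
have [g [Og _ _ g_L2]] := hR _ (OL_inv O2).
have A2u := gramQ_unit hG2.2.2.
have g_isom : g^T *m gram_sum G1 G2 *m g = gram_sum G1 G2.
  by apply: isometry_mx => v w hv hw; case: Og => _ [_ [_ h]]; apply: h; apply: (Gam_inL hGam).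
have iu : invmx phi2 \in unitmx by rewrite unitmx_inv O2.1.
have [gE g1_isom] := block_isometry_diag A2u iu g_isom g_L2.
set g1 := ulsubmx g in gE g1_isom.
have Og1 : OL G1 g1 by apply: (OL_block_of_OGam iu) => //; move: Og; rewrite {1}gE.
exists (phi1 *m g1); first exact: OL_mul.
move=> x hx; have [y hxy] := Gam_proj1 hG1 hGam hx.
have : twist_glue G1 f Gam (col_mx (phi1 *m g1 *m x) y).
  apply/Gf_E; exists (g *m col_mx x y); first by case: Og => _ [+ _]; apply.
  by rewrite {1}gE !block_diag_mul mulKVmx ?O2.1 // mulmxA.
case/(twist_glue_partner hGam) => x0 [_ g0 d0 l0].
have l1 := Oq_congr Of d0 hx (Gam_glue_inL1 hG1 hGam g0 hxy).
by rewrite -(subrK (f x0) (phi1 *m g1 *m x)) -addrA; apply: inLD.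
Qed.

End Converse.

Theorem proposition5p3 (n1 : nat) (G1 : 'M[int]_n1) :
  nde_lattice G1 ->
  (OL_onto_Oq G1 <->
   exists n2 : nat, exists G2 : 'M[int]_n2,
     nde_lattice G2 /\
     exists Gam : 'cV[rat]_(n1 + n2) -> Prop,
       [/\ good_overlattice G1 G2 Gam, ess_unique G1 G2 Gam & restr_onto G1 G2 Gam]).
Proof.
move=> hG1; split=> [OL_Oq | [n2 [G2 [hG2 [Gam [hGam hE hR]]]]]].
  exists n1, (- G1); split; first exact: nde_lattice_opp.
  exists (diag_glue G1); split.
  - exact: diag_glue_good.
  - exact: diag_glue_ess_unique.
  - exact: diag_glue_restr_onto.
exact: (OL_onto_Oq_of_glue hG1 hG2 hGam hE hR).
Qed.
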